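(* Let $\mathbf{X}$ be a finitely supported real random variable with $\mathbf{E}[\mathbf{X}]=0$ and $\mathrm{Var}[\mathbf{X}]=1$ that takes at most $\ell$ distinct values, and let $d\ge 1$ and $s\ge 1$ be natural numbers. Then there do not exist (for any $n$) two multilinear polynomials $p,q$ of degree at most $d$ over $\mathbb{R}^n$ with $\mathrm{sparsity}(p)=s$ and $\mathrm{sparsity}(q)>\Phi(d,s,\ell)$ such that $p(\mathbf{X}^{\otimes n})$ and $q(\mathbf{X}^{\otimes n})$ are identically distributed. Consequently $\mathrm{Max\text{-}Sparsity\text{-}Gap}_{\mathbf{X},d}(s)$ is well defined and \[ \mathrm{Max\text{-}Sparsity\text{-}Gap}_{\mathbf{X},d}(s)\le \Phi(d,s,\ell):=2^{2d^2\cdot(\ell^{ds}+3)}. \]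
   Context: A multilinear polynomial of degree at most $d$ over $\mathbb{R}^n$ is $p(x)=\sum_{S\subseteq[n],|S|\le d}\widehat{p}(S)\prod_{i\in S}x_i$; $\mathrm{sparsity}(p)$ is the number of nonzero coefficients. $\mathrm{Max\text{-}Sparsity\text{-}Gap}_{\mathbf{X},d}(s)$ is the largest natural number $t$ such that there exist (for some $n$) multilinear polynomials $p,q$ of degree at most $d$ with $\mathrm{sparsity}(p)=s$, $\mathrm{sparsity}(q)=t$, and $p(\mathbf{X}^{\otimes n})$, $q(\mathbf{X}^{\otimes n})$ identically distributed (where $\mathbf{X}^{\otimes n}$ is a vector of $n$ i.i.d. copies of $\mathbf{X}$), while no such pair exists with $\mathrm{sparsity}(q)>t$. *)

From HB Require Import structures.
From mathcomp Require Import all_boot all_order all_algebra.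
From mathcomp Require Import reals.
Set Implicit Arguments. Unset Strict Implicit. Unset Printing Implicit Defensive.
Import Order.TTheory GRing.Theory Num.Theory.
Local Open Scope ring_scope.

(* A finitely supported real random variable X is given by its k atoms
   [v i] (pairwise distinct values) with probabilities [w i] > 0 summing to 1. *)
Definition finite_rv (R : realType) (k : nat) (v : 'I_k -> R) (w : 'I_k -> R) :=
  injective v /\ (forall i, 0 < w i) /\ \sum_(i < k) w i = 1.

Definition rv_mean (R : realType) (k : nat) (v w : 'I_k -> R) : R :=
  \sum_(i < k) w i * v i.

Definition rv_var (R : realType) (k : nat) (v w : 'I_k -> R) : R :=
  \sum_(i < k) w i * (v i - rv_mean v w) ^+ 2.

(* Multilinear polynomials over R^n: coefficient \hat p(S) for each S ⊆ [n]. *)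
Definition mlpoly (R : realType) (n : nat) := {ffun {set 'I_n} -> R}.

Definition ml_deg_le (R : realType) (n : nat) (p : mlpoly R n) (d : nat) :=
  forall S : {set 'I_n}, p S != 0 -> (#|S| <= d)%N.

Definition sparsity (R : realType) (n : nat) (p : mlpoly R n) : nat :=
  #|[set S : {set 'I_n} | p S != 0]|.

Definition ml_eval (R : realType) (n : nat) (p : mlpoly R n) (x : 'I_n -> R) : R :=
  \sum_(S : {set 'I_n}) p S * \prod_(i in S) x i.

(* P[ p(X^{⊗n}) = t ]: sum over outcomes a (atom index of each coordinate)
   of the product probability. *)
Definition law_at (R : realType) (k n : nat) (v w : 'I_k -> R)
    (p : mlpoly R n) (t : R) : R :=
  \sum_(a : {ffun 'I_n -> 'I_k} | ml_eval p (fun i => v (a i)) == t)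
     \prod_(i < n) w (a i).

(* p(X^{⊗n}) and q(X^{⊗n}) are identically distributed (both are finitely
   supported, so equal laws = equal probability mass at every real t). *)
Definition ident_distr (R : realType) (k n : nat) (v w : 'I_k -> R)
    (p q : mlpoly R n) :=
  forall t : R, law_at v w p t = law_at v w q t.

(* t is an admissible value in the definition of Max-Sparsity-Gap_{X,d}(s). *)
Definition gap_achievable (R : realType) (k : nat) (v w : 'I_k -> R)
    (d s t : nat) :=
  exists (n : nat) (p q : mlpoly R n),
    [/\ ml_deg_le p d, ml_deg_le q d, sparsity p = s, sparsity q = t
      & ident_distr v w p q].

Definition Phi (d s l : nat) : nat := (2 ^ (2 * d ^ 2 * (l ^ (d * s) + 3)))%N.

From HB Require Import structures.
From mathcomp Require Import all_boot all_order all_algebra.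
From mathcomp Require Import reals.
From mathcomp Require Import ring zify.
From Stdlib Require Import Classical.
Import Order.TTheory GRing.Theory Num.Theory.
Local Open Scope ring_scope.

Set Implicit Arguments.
Unset Strict Implicit.
Unset Printing Implicit Defensive.

(* Pick two distinct atoms a, b of X (there are two, as Var X = 1) and restrict
   q to {a, b}^n: this gives a function F on the Boolean cube of Fourier degree
   at most d, for which every variable of every monomial of q is relevant.  As
   p(X^n) and q(X^n) have the same law, F takes at most as many values as p(X^n),
   hence at most L = l^(ds) values, p depending on at most ds variables.  A
   Boolean-valued function of degree D has total influence at most D, while each
   of its relevant variables has influence at least 2^-D / 4 (a nonzero function
   of degree D is nonzero on a 2^-D fraction of the cube); splitting F into its
   level-set indicators, each of degree at most dL, bounds the number of
   relevant variables of F, and q has at most (#relevant + 1)^d monomials. *)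

Lemma leq_card_bigcup (T : finType) (I : Type) (r : seq I) (P : pred I)
    (F : I -> {set T}) :
  (#|\bigcup_(i <- r | P i) F i| <= \sum_(i <- r | P i) #|F i|)%N.
Proof.
elim/big_ind2: _ => [|A m B k hA hB|//]; first by rewrite cards0.
exact: leq_trans (leq_card_setU _ _) (leq_add hA hB).
Qed.

Section BooleanFourier.
Variables (R : realFieldType) (n : nat).
Implicit Types (i : 'I_n) (S T U A z : {set 'I_n}) (F G : {set 'I_n} -> R).

Local Notation N := ((2 ^ n)%:R : R).

Lemma cube_size_neq0 : N != 0.
Proof. by rewrite pnatr_eq0 expn_eq0. Qed.

Lemma cube_size_gt0 : 0 < N.
Proof. by rewrite ltr0n expn_gt0. Qed.

(* A set [A] stands for the point of {-1,1}^n that is -1 exactly on [A];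
   [walsh S] is the character x |-> \prod_(i in S) x_i. *)
Definition walsh S A : R := \prod_i (if (i \in S) && (i \in A) then -1 else 1).

Lemma walshC S A : walsh S A = walsh A S.
Proof. by apply: eq_bigr => i _; rewrite andbC. Qed.

Lemma walsh0 A : walsh set0 A = 1.
Proof. by apply: big1 => i _; rewrite in_set0. Qed.

Definition symd S T := (S :\: T) :|: (T :\: S).

Lemma card_symd S T : (#|symd S T| <= #|S| + #|T|)%N.
Proof.
apply: leq_trans (leq_card_setU _ _) _.
by apply: leq_add; apply: subset_leq_card; apply: subsetDl.
Qed.

Lemma walshM S T A : walsh S A * walsh T A = walsh (symd S T) A.
Proof.
rewrite -big_split /=; apply: eq_bigr => i _; rewrite !inE.
by case: (i \in S); case: (i \in T); case: (i \in A); rewrite /= ?mulrNN ?mulr1 ?mul1r.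
Qed.

Lemma sum_subsets_prod (f g : 'I_n -> R) :
  \sum_(U : {set 'I_n}) \prod_i (if i \in U then f i else g i) = \prod_i (f i + g i).
Proof. by rewrite bigA_distr. Qed.

Lemma walsh_orthogonal S T :
  \sum_A walsh S A * walsh T A = if S == T then N else 0.
Proof.
under eq_bigr do rewrite walshM.
rewrite (eq_bigr (fun A => \prod_i (if i \in A then
          (if i \in symd S T then -1 else 1) else 1))); last first.
  by move=> A _; apply: eq_bigr => i _; rewrite andbC; case: (i \in A).
rewrite sum_subsets_prod; have [<-|neST] := eqVneq S T.
  rewrite (eq_bigr (fun _ => 2)) ?prodr_const ?card_ord ?natrX // => i _.
  by rewrite /symd setDv setU0 in_set0.
have [i iST] : exists i, i \in symd S T.
  apply/set0Pn; apply: contra neST => /eqP E; apply/eqP/setP => i.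
  by move/setP: E => /(_ i); rewrite !inE; case: (i \in S); case: (i \in T).
by rewrite (bigD1 i) //= iST addNr mul0r.
Qed.

Definition fcoef F T : R := N^-1 * \sum_A F A * walsh T A.

Lemma eq_fcoef F G : F =1 G -> fcoef F =1 fcoef G.
Proof. by move=> FG T; congr (_ * _); apply: eq_bigr => A _; rewrite FG. Qed.

Lemma fcoef_walsh_sum (c : {set 'I_n} -> R) :
  fcoef (fun A => \sum_S c S * walsh S A) =1 c.
Proof.
move=> T; rewrite /fcoef.
under eq_bigr do rewrite mulr_suml.
rewrite exchange_big /=.
under eq_bigr => S _.
  rewrite (eq_bigr (fun A => c S * (walsh S A * walsh T A))); last first.
    by move=> A _; rewrite mulrA.
  rewrite -mulr_sumr walsh_orthogonal.
  over.
rewrite (bigD1 T) //= eqxx big1 ?addr0 => [|S /negPf ->]; last by rewrite mulr0.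
by rewrite mulrCA mulVf ?cube_size_neq0 ?mulr1.
Qed.

Lemma fourier_inversion F A : F A = \sum_T fcoef F T * walsh T A.
Proof.
rewrite /fcoef.
under eq_bigr => T _ do rewrite -mulrA mulr_suml.
rewrite -mulr_sumr exchange_big /=.
under eq_bigr => B _.
  rewrite (eq_bigr (fun T => F B * (walsh B T * walsh A T))); last first.
    by move=> T _; rewrite (walshC T B) (walshC T A) mulrA.
  rewrite -mulr_sumr walsh_orthogonal.
  over.
rewrite (bigD1 A) //= eqxx big1 ?addr0 => [|B /negPf]; last first.
  by rewrite eq_sym => ->; rewrite mulr0.
by rewrite mulrCA mulVf ?cube_size_neq0 ?mulr1.
Qed.

Lemma parseval F : \sum_A F A ^+ 2 = N * \sum_S fcoef F S ^+ 2.
Proof.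
transitivity (\sum_A F A * \sum_S fcoef F S * walsh S A).
  by apply: eq_bigr => A _; rewrite -fourier_inversion expr2.
under eq_bigr do rewrite mulr_sumr.
rewrite exchange_big mulr_sumr; apply: eq_bigr => S _.
rewrite expr2 {3}/fcoef mulrCA (mulVKf cube_size_neq0) mulr_sumr.
by apply: eq_bigr => A _; ring.
Qed.

Lemma fcoef_affine a b F T :
  fcoef (fun A => a * F A + b) T = a * fcoef F T + b * fcoef (fun _ => 1) T.
Proof.
rewrite /fcoef mulrCA (mulrCA b) -mulrDr; congr (_ * _).
by rewrite !mulr_sumr -big_split /=; apply: eq_bigr => A _; ring.
Qed.

Lemma fcoef_const c T : fcoef (fun _ => c) T = if T == set0 then c else 0.
Proof.
rewrite -(fcoef_walsh_sum (fun S => if S == set0 then c else 0)).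
apply: eq_fcoef => A; rewrite (bigD1 set0) //= eqxx walsh0 mulr1.
by rewrite big1 ?addr0 // => S /negPf ->; rewrite mul0r.
Qed.

Definition fdeg_le F D := forall T, (D < #|T|)%N -> fcoef F T = 0.

Lemma eq_fdeg_le F G D : F =1 G -> fdeg_le F D -> fdeg_le G D.
Proof. by move=> FG HF T HT; rewrite -(eq_fcoef FG) HF. Qed.

Lemma fdeg_le_leq F D D' : (D <= D')%N -> fdeg_le F D -> fdeg_le F D'.
Proof. by move=> DD' HF T HT; apply: HF; apply: leq_ltn_trans HT. Qed.

Lemma fdeg_le_const c D : fdeg_le (fun _ => c) D.
Proof. by move=> T; rewrite fcoef_const; case: eqP => // ->; rewrite cards0. Qed.

Lemma fdeg_le_affine a b F D : fdeg_le F D -> fdeg_le (fun A => a * F A + b) D.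
Proof.
by move=> HF T HT; rewrite fcoef_affine HF // (fdeg_le_const 1 HT) !mulr0 addr0.
Qed.

Lemma fdeg_leM F G D1 D2 :
  fdeg_le F D1 -> fdeg_le G D2 -> fdeg_le (fun A => F A * G A) (D1 + D2).
Proof.
move=> HF HG U HU.
have expand A : F A * G A * walsh U A =
    \sum_S \sum_T fcoef F S * fcoef G T * (walsh (symd S T) A * walsh U A).
  rewrite {1}(fourier_inversion F A) {1}(fourier_inversion G A) !mulr_suml.
  apply: eq_bigr => S _; rewrite mulr_sumr mulr_suml; apply: eq_bigr => T _.
  by rewrite -walshM; ring.
rewrite /fcoef (eq_bigr _ (fun A _ => expand A)) exchange_big big1 ?mulr0 //.
move=> S _; rewrite exchange_big big1 // => T _.
rewrite -mulr_sumr walsh_orthogonal.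
have [E|] := eqVneq (symd S T) U; last by rewrite mulr0.
have [FS0|nF] := eqVneq (fcoef F S) 0; first by rewrite FS0 !mul0r.
have [GT0|nG] := eqVneq (fcoef G T) 0; first by rewrite GT0 mulr0 mul0r.
have hS : (#|S| <= D1)%N by rewrite leqNgt; apply: contra nF => /HF ->.
have hT : (#|T| <= D2)%N by rewrite leqNgt; apply: contra nG => /HG ->.
have := leq_trans (card_symd S T) (leq_add hS hT).
by rewrite E leqNgt HU.
Qed.

Lemma fdeg_le_prod (I : Type) (r : seq I) (P : pred I)
    (H : I -> {set 'I_n} -> R) (D : I -> nat) :
  (forall j, P j -> fdeg_le (H j) (D j)) ->
  fdeg_le (fun A => \prod_(j <- r | P j) H j A) (\sum_(j <- r | P j) D j).
Proof.
move=> HH; elim: r => [|x r IH].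
  by apply: (@eq_fdeg_le (fun _ => 1)) => [A|]; rewrite big_nil //; apply: fdeg_le_const.
rewrite big_cons; case: ifP => Px.
  apply: (@eq_fdeg_le (fun A => H x A * \prod_(j <- r | P j) H j A)).
    by move=> A; rewrite big_cons Px.
  exact: fdeg_leM (HH x Px) IH.
by apply: (@eq_fdeg_le _ _ _ _ IH) => A; rewrite big_cons Px.
Qed.

Definition relevant F := [set i | [exists A, F (A :\ i) != F (i |: A)]].

Lemma walsh_setU1 S i A :
  walsh S (i |: A) = (if i \in S then -1 else 1) * walsh S (A :\ i).
Proof.
rewrite /walsh (bigD1 i) //= [in RHS](bigD1 i) //= !inE eqxx andbT andbF mul1r.
by congr (_ * _); apply: eq_bigr => j /negPf ji; rewrite !inE ji.
Qed.

Definition laplacian F i A :=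
  \sum_(S : {set 'I_n}) (if i \in S then fcoef F S else 0) * walsh S A.

Lemma fcoef_laplacian F i S :
  fcoef (laplacian F i) S = if i \in S then fcoef F S else 0.
Proof. exact: fcoef_walsh_sum. Qed.

Lemma fdeg_le_laplacian F i D : fdeg_le F D -> fdeg_le (laplacian F i) D.
Proof. by move=> HF T HT; rewrite fcoef_laplacian HF //; case: ifP. Qed.

Lemma laplacian_diff F i A :
  F (A :\ i) - F (i |: A) = 2 * laplacian F i (A :\ i).
Proof.
rewrite (fourier_inversion F (A :\ i)) (fourier_inversion F (i |: A)).
rewrite /laplacian mulr_sumr -sumrB; apply: eq_bigr => S _; rewrite walsh_setU1.
by case: (i \in S); ring.
Qed.

Lemma laplacian_sqr F i A : laplacian F i A ^+ 2 = laplacian F i (A :\ i) ^+ 2.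
Proof.
have [iA|iA] := boolP (i \in A); last by rewrite (setDidPl _) // disjoint_sym disjoints1.
rewrite -{1}(setD1K iA) /laplacian -sqrrN -sumrN.
congr (_ ^+ _); apply: eq_bigr => S _; rewrite walsh_setU1 setDDl setUid.
by case: (i \in S); ring.
Qed.

Lemma relevant_fcoef F S i : fcoef F S != 0 -> i \in S -> i \in relevant F.
Proof.
move=> FS iS; apply: contraR FS => iF.
have L0 A : laplacian F i A = 0.
  apply/eqP; rewrite -sqrf_eq0 laplacian_sqr sqrf_eq0.
  have : F (A :\ i) - F (i |: A) == 0.
    rewrite subr_eq0; apply: contraR iF => neq; rewrite inE.
    by apply/existsP; exists A.
  by rewrite laplacian_diff mulf_eq0 pnatr_eq0.
have := fcoef_laplacian F i S; rewrite iS => <-.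
by rewrite (@eq_fcoef _ (fun _ => 0) L0) fcoef_const if_same.
Qed.

Lemma subset_prodr U T :
  (U \subset T)%:R = \prod_i (if i \in U then (i \in T)%:R else 1 : R).
Proof.
have [/subsetP sUT|/subsetPn [i iU iT]] := boolP (U \subset T).
  by rewrite big1 // => i _; case: ifP => // /sUT ->.
by rewrite (bigD1 i) //= iU (negPf iT) mul0r.
Qed.

Lemma sum_walsh_fiber T S z : z \subset ~: T ->
  \sum_(U : {set 'I_n} | U \subset T) walsh S (z :|: U) * walsh T U
    = (T \subset S)%:R * (2 ^ #|T|)%:R * walsh S z.
Proof.
move=> /subsetP zT.
rewrite big_mkcond (eq_bigr (fun U => \prod_i (if i \in U then
   (i \in T)%:R * (if i \in S then -1 else 1) * (if i \in T then -1 else 1)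
   else (if (i \in S) && (i \in z) then -1 else 1)))) /=; last first.
  move=> U _.
  transitivity ((U \subset T)%:R * (walsh S (z :|: U) * walsh T U)).
    by case: (U \subset T); rewrite ?mul0r ?mul1r.
  rewrite subset_prodr /walsh -!big_split; apply: eq_bigr => i _ /=.
  rewrite !inE; case: (i \in U);
    by rewrite ?orbT ?orbF ?andbT ?andbF ?mulrA ?mul1r ?mulr1.
rewrite sum_subsets_prod.
have [/subsetP sTS|/subsetPn [i iT iS]] := boolP (T \subset S); last first.
  by rewrite (bigD1 i) //= iT (negPf iS) /= !mul1r addNr !mul0r.
have -> : (2 ^ #|T|)%:R = \prod_i (if i \in T then 2 else 1 : R).
  by rewrite -big_mkcond /= prodr_const natrX.
rewrite mul1r /walsh -big_split /=; apply: eq_bigr => i _.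
have [iT|iT] := boolP (i \in T); last by rewrite /=; ring.
have iz : i \notin z by apply: contraL iT => /zT; rewrite inE.
by rewrite sTS ?(negPf iz) //=; ring.
Qed.

Lemma fiber_sum_top G T z : z \subset ~: T ->
  (forall S, fcoef G S != 0 -> (#|S| <= #|T|)%N) ->
  \sum_(U : {set 'I_n} | U \subset T) G (z :|: U) * walsh T U
    = (2 ^ #|T|)%:R * fcoef G T.
Proof.
move=> zT Tmax.
transitivity (\sum_S fcoef G S * ((T \subset S)%:R * (2 ^ #|T|)%:R * walsh S z)).
  under eq_bigr => U _ do rewrite (fourier_inversion G) mulr_suml.
  rewrite exchange_big; apply: eq_bigr => S _.
  by rewrite -sum_walsh_fiber // mulr_sumr; apply: eq_bigr => U _; rewrite mulrA.
have walshTz : walsh T z = 1.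
  apply: big1 => i _; case: (boolP (i \in z)) => [/(subsetP zT)|]; last by rewrite andbF.
  by rewrite inE => /negPf ->.
rewrite (bigD1 T) //= subxx walshTz mul1r mulr1 mulrC big1 ?addr0 // => S nST.
have [sTS|] := boolP (T \subset S); last by rewrite mul0r mul0r mulr0.
have [->|nz] := eqVneq (fcoef G S) 0; first by rewrite mul0r.
have : (#|T| < #|S|)%N by apply: proper_card; rewrite properEneq eq_sym nST.
by rewrite ltnNge Tmax.
Qed.

Lemma exists_fcoef_neq0 G A0 : G A0 != 0 -> exists S, fcoef G S != 0.
Proof.
move=> GA0; apply/existsP; apply: contraR GA0; rewrite negb_exists => /forallP G0.
rewrite fourier_inversion big1 // => S _.
by move/negPn: (G0 S) => /eqP ->; rewrite mul0r.
Qed.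

(* With T of maximal size in the Fourier support of G, G does not vanish on any
   fiber {z :|: U | U \subset T} (z \subset ~: T), by fiber_sum_top; picking a
   nonzero point in each of the 2 ^ (n - #|T|) fibers injects them into the
   support. *)
Lemma card_support_fdeg G D A0 : fdeg_le G D -> G A0 != 0 ->
  (2 ^ n <= #|[set A | G A != 0%R]| * 2 ^ D)%N.
Proof.
move=> HG /exists_fcoef_neq0 [S0 GS0].
have [T GT Tmax] := @arg_maxnP _ S0 (fun S => fcoef G S != 0) (fun S => #|S|) GS0.
have TD : (#|T| <= D)%N by rewrite leqNgt; apply: contra GT => /HG ->.
pose good z U := (U \subset T) && (G (z :|: U) != 0).
have goodP z : z \subset ~: T -> [exists U, good z U].
  move=> zT; apply: contraLR GT; rewrite negb_exists => /forallP noU.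
  have : (2 ^ #|T|)%:R * fcoef G T == 0.
    rewrite -(fiber_sum_top zT) //; apply/eqP/big1 => U sUT.
    by have := noU U; rewrite /good sUT negbK => /eqP ->; rewrite mul0r.
  by rewrite negbK mulf_eq0 pnatr_eq0 expn_eq0.
pose phi z := z :|: odflt set0 [pick U | good z U].
have phiP z : z \subset ~: T -> good z (odflt set0 [pick U | good z U]).
  by move/goodP/existsP => [U gU]; case: pickP => [//|/(_ U)]; rewrite gU.
have phiK z : z \subset ~: T -> phi z :\: T = z.
  move=> zT; have /andP [sUT _] := phiP z zT.
  rewrite /phi setDUl (setDidPl _) ?disjoints_subset //.
  by rewrite (eqP (_ : _ :\: T == set0)) ?setU0 // setD_eq0.
have phi_inj : {in powerset (~: T) &, injective phi}.
  by move=> z1 z2; rewrite !powersetE => /phiK h1 /phiK h2 E; rewrite -h1 -h2 E.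
have : (#|powerset (~: T)| <= #|[set A | G A != 0%R]|)%N.
  rewrite -(card_in_imset phi_inj); apply: subset_leq_card.
  apply/subsetP => A /imsetP [z]; rewrite powersetE => zT ->.
  by rewrite inE; case/andP: (phiP z zT).
rewrite card_powerset => le_supp.
have -> : (2 ^ n = 2 ^ #|~: T| * 2 ^ #|T|)%N by rewrite -expnD addnC cardsC card_ord.
by apply: leq_mul => //; apply: leq_pexp2l.
Qed.

Definition influence F i := \sum_(S : {set 'I_n}) (if i \in S then fcoef F S ^+ 2 else 0).

Lemma sum_influence F D :
  fdeg_le F D -> \sum_i influence F i <= D%:R * \sum_S fcoef F S ^+ 2.
Proof.
move=> HF; rewrite /influence exchange_big mulr_sumr; apply: ler_sum => S _.
rewrite -big_mkcond sumr_const -[_ *+ _]mulr_natl.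
have [->|FS] := eqVneq (fcoef F S) 0; first by rewrite expr0n /= !mulr0.
apply: ler_wpM2r; first exact: sqr_ge0.
by rewrite ler_nat leqNgt; apply: contra FS => /HF ->.
Qed.

Section BooleanValued.
Variables (g : {set 'I_n} -> R) (D : nat).
Hypotheses (g01 : forall A, g A = 0 \/ g A = 1) (gD : fdeg_le g D).

Lemma sum_fcoef_sqr_boolean : \sum_S fcoef g S ^+ 2 <= 1.
Proof.
rewrite -(ler_pM2l cube_size_gt0) -parseval mulr1.
rewrite (_ : N = \sum_(A : {set 'I_n}) 1); last first.
  by rewrite sumr_const -cardsT -powersetT card_powerset cardsT card_ord.
by apply: ler_sum => A _; case: (g01 A) => ->; rewrite ?expr0n ?expr1n.
Qed.

Lemma laplacian_sqr_boolean i A :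
  4 * laplacian g i A ^+ 2 = (laplacian g i A != 0)%:R.
Proof.
rewrite -[_ != 0]negbK -sqrf_eq0 laplacian_sqr sqrf_eq0 negbK.
set L := laplacian g i (A :\ i).
rewrite (_ : 4 * _ = (2 * L) ^+ 2); last by ring.
rewrite (_ : L != 0 = (2 * L != 0)); last by rewrite mulf_eq0 pnatr_eq0.
rewrite -laplacian_diff.
by case: (g01 (A :\ i)) => ->; case: (g01 (i |: A)) => ->;
  rewrite ?subrr ?sub0r ?subr0 ?sqrrN ?expr0n ?expr1n ?eqxx ?oppr_eq0 ?oner_eq0.
Qed.

(* 4 (L_i g)^2 is the indicator of the support of L_i g, so by Parseval that
   support has 4 * 2 ^ n * influence g i points. *)
Lemma influence_relevant i : i \in relevant g -> 1 <= 4 * (2 ^ D)%:R * influence g i.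
Proof.
rewrite inE => /existsP [A neq].
have LA : laplacian g i (A :\ i) != 0.
  by apply: contra neq => /eqP L0; rewrite -subr_eq0 laplacian_diff L0 mulr0.
have suppE : (#|[set A | laplacian g i A != 0]|)%:R = 4 * N * influence g i.
  rewrite -sum1dep_card natr_sum big_mkcond -mulrA.
  rewrite (_ : influence g i = \sum_S fcoef (laplacian g i) S ^+ 2); last first.
    by apply: eq_bigr => S _; rewrite fcoef_laplacian; case: ifP; rewrite ?expr0n.
  rewrite -parseval mulr_sumr; apply: eq_bigr => B _.
  by rewrite laplacian_sqr_boolean; case: (_ != 0).
have := card_support_fdeg (fdeg_le_laplacian i gD) LA.
rewrite -(ler_nat R) natrM suppE => H.
rewrite -(ler_pM2l cube_size_gt0) mulr1; apply: (le_trans H).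
by rewrite [leLHS](_ : _ = N * (4 * (2 ^ D)%:R * influence g i)) //; ring.
Qed.

Lemma card_relevant_boolean : (#|relevant g| <= 4 * D * 2 ^ D)%N.
Proof.
rewrite -(ler_nat R) -sum1_card natr_sum.
apply: le_trans (_ : \sum_(i in relevant g) 4 * (2 ^ D)%:R * influence g i <= _).
  exact: ler_sum influence_relevant.
apply: le_trans (_ : 4 * (2 ^ D)%:R * \sum_i influence g i <= _).
  rewrite -mulr_sumr ler_wpM2l ?mulr_ge0 //.
  rewrite [leRHS](bigID (mem (relevant g))) /= lerDl.
  by apply: sumr_ge0 => i _; apply: sumr_ge0 => S _; case: ifP => // _; apply: sqr_ge0.
rewrite mulnAC !natrM ler_wpM2l ?mulr_ge0 //.
apply: le_trans (sum_influence gD) _.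
by rewrite -[leRHS]mulr1 ler_wpM2l // sum_fcoef_sqr_boolean.
Qed.

End BooleanValued.

(* [g j] below is the Lagrange indicator of the level set {F = V`_j}. *)
Lemma card_relevant_range F D (V : seq R) :
  (forall A, F A \in V) -> fdeg_le F D ->
  (#|relevant F| <= size V * (4 * (D * size V) * 2 ^ (D * size V)))%N.
Proof.
move=> FV FD.
pose g j A := \prod_(y <- V | y != V`_j) ((F A - y) / (V`_j - y)).
have gE j A : g j A = (F A == V`_j)%:R.
  rewrite /g; have [->|ne] := eqVneq (F A) V`_j.
    by rewrite big1_seq // => y /andP [ne _]; rewrite divff // subr_eq0 eq_sym.
  by rewrite (big_rem (F A)) //= ne subrr !mul0r.
have gD j : fdeg_le (g j) (D * size V).
  apply: (@fdeg_le_leq _ (\sum_(y <- V | y != V`_j) D)).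
    apply: leq_trans (_ : \sum_(y <- V) D <= _)%N.
      by rewrite big_mkcond /= leq_sum // => y _; case: ifP.
    by rewrite big_const_seq count_predT iter_addn_0 mulnC.
  apply: fdeg_le_prod => y _.
  apply: (@eq_fdeg_le (fun A => (V`_j - y)^-1 * F A + (- y / (V`_j - y)))).
    by move=> A; rewrite mulrC mulrBl mulNr.
  exact: fdeg_le_affine.
have relF : relevant F \subset \bigcup_(j < size V) relevant (g j).
  apply/subsetP => i; rewrite inE => /existsP [A neq].
  have jV : (index (F (A :\ i)) V < size V)%N by rewrite index_mem.
  apply/bigcupP; exists (Ordinal jV) => //.
  rewrite inE; apply/existsP; exists A; rewrite !gE /= nth_index // eqxx.
  by rewrite [_ == F _]eq_sym (negPf neq) oner_eq0.
apply: leq_trans (subset_leq_card relF) _; apply: leq_trans (leq_card_bigcup _ _ _) _.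
rewrite -[X in (_ <= X * _)%N]card_ord -sum_nat_const; apply: leq_sum => j _.
by apply: card_relevant_boolean (gD j) => A; rewrite gE; case: eqP; [right|left].
Qed.

End BooleanFourier.

Arguments walsh {R n} S A.

Section CubeRestriction.
Variables (R : realType) (n : nat) (a b : R).
Hypothesis neq_ab : a != b.
Implicit Types (i : 'I_n) (S T A : {set 'I_n}) (q : mlpoly R n).

Definition cube_point A (j : 'I_n) := if j \in A then b else a.

Definition cube_restr (q : mlpoly R n) A := ml_eval q (cube_point A).

Lemma sum_monomial_walsh S T :
  \sum_A (\prod_(j in S) cube_point A j) * walsh T A =
  \prod_i ((if i \in S then b else 1) * (if i \in T then -1 else 1)
           + (if i \in S then a else 1)).
Proof.
rewrite -sum_subsets_prod; apply: eq_bigr => A _.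
rewrite big_mkcond /walsh -big_split /=; apply: eq_bigr => i _; rewrite /cube_point.
by case: (i \in A); case: (i \in S); case: (i \in T); rewrite /= ?mulr1 ?mul1r.
Qed.

Lemma sum_monomial_walsh_eq0 S T : ~~ (T \subset S) ->
  \sum_A (\prod_(j in S) cube_point A j) * walsh T A = 0.
Proof.
case/subsetPn => i iT iS; rewrite sum_monomial_walsh (bigD1 i) //= iT (negPf iS).
by rewrite mul1r addNr mul0r.
Qed.

Lemma sum_monomial_walsh_neq0 T :
  \sum_A (\prod_(j in T) cube_point A j) * walsh T A != 0.
Proof.
rewrite sum_monomial_walsh; apply/prodf_neq0 => i _.
case: (i \in T); first by rewrite mulrN1 addrC subr_eq0.
by rewrite mulr1 (pnatr_eq0 _ 2).
Qed.

Lemma fcoef_cube_restr q T : fcoef (cube_restr q) T =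
  (2 ^ n)%:R^-1 * \sum_S q S * \sum_A (\prod_(j in S) cube_point A j) * walsh T A.
Proof.
rewrite /fcoef /cube_restr /ml_eval; congr (_ * _).
under eq_bigr do rewrite mulr_suml.
rewrite exchange_big; apply: eq_bigr => S _.
by rewrite mulr_sumr; apply: eq_bigr => A _; rewrite mulrA.
Qed.

Lemma fdeg_le_cube_restr q d : ml_deg_le q d -> fdeg_le (cube_restr q) d.
Proof.
move=> qd T dT; rewrite fcoef_cube_restr big1 ?mulr0 // => S _.
have [->|qS] := eqVneq (q S) 0; first by rewrite mul0r.
rewrite sum_monomial_walsh_eq0 ?mulr0 //; apply: contraL dT => /subset_leq_card TS.
by rewrite -leqNgt (leq_trans TS) ?qd.
Qed.

(* The largest monomial of q containing i survives in the Fourier expansion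
   of the restriction, because no larger monomial can cancel it. *)
Lemma relevant_cube_restr q S0 i :
  q S0 != 0 -> i \in S0 -> i \in relevant (cube_restr q).
Proof.
move=> qS0 iS0.
have [|T /andP [iT qT] Tmax] :=
  @arg_maxnP _ S0 (fun S => (i \in S) && (q S != 0)) (fun S => #|S|).
  by rewrite iS0 qS0.
apply: (@relevant_fcoef _ _ _ T) => //.
rewrite fcoef_cube_restr mulf_eq0 negb_or invr_eq0 pnatr_eq0 expn_eq0 /=.
rewrite (bigD1 T) //= [X in _ + X]big1 ?addr0.
  exact: mulf_neq0 qT (sum_monomial_walsh_neq0 T).
move=> S nST; have [->|qS] := eqVneq (q S) 0; first by rewrite mul0r.
have [TS|] := boolP (T \subset S); last by move/sum_monomial_walsh_eq0 ->; rewrite mulr0.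
have : (#|S| <= #|T|)%N by apply: Tmax; rewrite (subsetP TS _ iT).
by rewrite leqNgt proper_card // properEneq eq_sym nST.
Qed.

End CubeRestriction.

Lemma finite_rv_two_atoms (R : realType) (k : nat) (v w : 'I_k -> R) :
  finite_rv v w -> rv_mean v w = 0 -> rv_var v w = 1 -> (1 < k)%N.
Proof.
case: k v w => [|[|//]] v w [_ [w_gt0 w1]] mean0 var1.
  by move: w1; rewrite big_ord0 => /eqP; rewrite eq_sym oner_eq0.
move: mean0 var1; rewrite /rv_var /rv_mean !big_ord1 => /eqP.
rewrite mulf_eq0 (gt_eqF (w_gt0 _)) /= => /eqP ->.
by rewrite mulr0 subr0 expr0n mulr0 => /eqP; rewrite eq_sym oner_eq0.
Qed.

Section ProductValues.
Variables (R : realType) (k n : nat) (v w : 'I_k -> R).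
Hypothesis w_gt0 : forall j, 0 < w j.
Implicit Types (p q : mlpoly R n) (x : {ffun 'I_n -> 'I_k}).

Definition rv_values p : seq R :=
  undup [seq ml_eval p (fun i => v (x i)) | x : {ffun 'I_n -> 'I_k}].

Lemma rv_valuesP p x : ml_eval p (fun i => v (x i)) \in rv_values p.
Proof. by rewrite mem_undup; apply: image_f. Qed.

Lemma law_at_value_neq0 p x : law_at v w p (ml_eval p (fun i => v (x i))) != 0.
Proof.
rewrite /law_at (bigD1 x) //= gt_eqF // ltr_pwDl ?prodr_gt0 //.
by apply: sumr_ge0 => y _; apply: prodr_ge0 => i _; apply: ltW.
Qed.

Lemma law_at_neq0 p t : law_at v w p t != 0 -> t \in rv_values p.
Proof.
rewrite /law_at; case: (pickP (fun x => ml_eval p (fun i => v (x i)) == t)).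
  by move=> x /eqP <- _; apply: rv_valuesP.
by move=> none; rewrite big_pred0 ?eqxx.
Qed.

Lemma size_rv_values_ident_distr p q :
  ident_distr v w p q -> (size (rv_values q) <= size (rv_values p))%N.
Proof.
move=> pq; apply: uniq_leq_size; first exact: undup_uniq.
move=> t; rewrite mem_undup => /imageP [x _ ->].
by apply: law_at_neq0; rewrite pq law_at_value_neq0.
Qed.

Lemma size_rv_values p d (j0 : 'I_k) :
  ml_deg_le p d -> (size (rv_values p) <= k ^ (d * sparsity p))%N.
Proof.
move=> pd; pose J := \bigcup_(S | p S != 0) S.
have cardJ : (#|J| <= d * sparsity p)%N.
  apply: leq_trans (leq_card_bigcup _ _ _) _.
  rewrite /sparsity -sum1dep_card big_distrr /= leq_sum // => S /pd.
  by rewrite muln1.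
have eval_on_J x : ml_eval p (fun i => v (x i)) =
    ml_eval p (fun i => v ([ffun i => if i \in J then x i else j0] i)).
  apply: eq_bigr => S _; have [->|pS] := eqVneq (p S) 0; first by rewrite !mul0r.
  congr (_ * _); apply: eq_bigr => i iS.
  by rewrite ffunE (subsetP (bigcup_sup S pS)).
apply: leq_trans (_ : size [seq ml_eval p (fun i => v (x i))
                             | x in pffun_on j0 J [set: 'I_k]] <= _)%N.
  apply: uniq_leq_size; first exact: undup_uniq.
  move=> t; rewrite mem_undup => /imageP [x _ ->]; rewrite eval_on_J.
  apply: image_f; apply/pffun_onP; split; last by move=> ? _; rewrite inE.
  by apply/subsetP => i; rewrite inE ffunE; case: (i \in J); rewrite ?eqxx.
rewrite size_image card_pffun_on cardsT card_ord.
by apply: leq_pexp2l; first exact: leq_ltn_trans (leq0n j0) (ltn_ord j0).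
Qed.

End ProductValues.

Section Counting.
Local Open Scope nat_scope.

Lemma card_small_subsets (T : finType) (X : {set T}) d :
  (#|[set S : {set T} | (S \subset X) && (#|S| <= d)]| <= (#|X| + 1) ^ d).
Proof.
elim: d => [|d IH].
  rewrite expn0 -(cards1 (set0 : {set T})) subset_leq_card //.
  by apply/subsetP => S; rewrite !inE leqn0 cards_eq0 => /andP [].
set small := [set S : {set T} | (S \subset X) && (#|S| <= d)].
have sub : [set S : {set T} | (S \subset X) && (#|S| <= d.+1)] \subset
    set0 |: [set p.1 |: p.2 | p in setX X small].
  apply/subsetP => S; rewrite !inE => /andP [SX cS].
  have [->|[x xS]] := set_0Vmem S; first by rewrite eqxx.
  apply/orP; right; apply/imsetP; exists (x, S :\ x); last by rewrite /= setD1K.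
  rewrite !inE (subsetP SX _ xS) (subset_trans (subsetDl _ _) SX) /=.
  by rewrite (cardsD1 x S) xS in cS.
apply: leq_trans (subset_leq_card sub) _.
apply: leq_trans (leq_card_setU _ _) _; rewrite cards1.
apply: leq_trans (_ : 1 + #|X| * (#|X| + 1) ^ d <= _).
  by rewrite leq_add2l (leq_trans (leq_imset_card _ _)) // cardsX leq_mul2l IH orbT.
by rewrite expnS mulnDl mul1n addnC leq_add2l expn_gt0 addn1.
Qed.

Lemma sqr_le_exp2 m : (m * m <= 2 ^ m.+1).
Proof.
elim: m => [//|m IH]; have [|m_gt2] := leqP m 2; first by case: m {IH} => [|[|[]]].
by rewrite expnS; nia.
Qed.

Lemma Phi_ge (d s l L : nat) : (1 <= d) -> (L <= l ^ (d * s)) ->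
  ((L * (4 * (d * L) * 2 ^ (d * L)) + 1) ^ d <= Phi d s l).
Proof.
move=> d_gt0; set M := l ^ (d * s) => LM.
have mono : (L * (4 * (d * L) * 2 ^ (d * L)) <= M * (4 * (d * M) * 2 ^ (d * M))).
  by rewrite !leq_mul // leq_pexp2l // leq_mul.
have bound : (M * (4 * (d * M) * 2 ^ (d * M)) <= 2 ^ (3 + d + M + d * M)).
  rewrite (_ : M * _ = 4 * d * (M * M) * 2 ^ (d * M)); last by ring.
  rewrite !expnD (_ : 2 ^ 3 * 2 ^ d * 2 ^ M = 4 * 2 ^ d * 2 ^ M.+1); last first.
    by rewrite (expnS 2 M); ring.
  by rewrite !leq_mul // ?sqr_le_exp2 // ltnW // ltn_expl.
have : (L * (4 * (d * L) * 2 ^ (d * L)) + 1 <= 2 ^ (2 * d * M + 6 * d)).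
  apply: leq_trans (_ : 2 ^ (3 + d + M + d * M).+1 <= _); last by apply: leq_pexp2l; nia.
  by rewrite expnS mul2n -addnn leq_add ?expn_gt0 // (leq_trans mono bound).
rewrite -(leq_exp2r _ _ d_gt0) => /leq_trans -> //.
by rewrite /Phi -expnM leq_pexp2l //; nia.
Qed.

End Counting.

Lemma sparsity_le_Phi (R : realType) (k : nat) (v w : 'I_k -> R) (l d n : nat)
    (p q : mlpoly R n) :
  finite_rv v w -> rv_mean v w = 0 -> rv_var v w = 1 -> (k <= l)%N -> (1 <= d)%N ->
  ml_deg_le p d -> ml_deg_le q d -> ident_distr v w p q ->
  (sparsity q <= Phi d (sparsity p) l)%N.
Proof.
move=> rv mean0 var1 kl d_gt0 pd qd pq.
have k_gt1 := finite_rv_two_atoms rv mean0 var1; have [v_inj [w_gt0 _]] := rv.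
pose j0 := Ordinal (ltnW k_gt1); pose j1 := Ordinal k_gt1.
have v01 : v j0 != v j1 by apply/eqP => /v_inj.
pose F := cube_restr (v j0) (v j1) q.
have FV A : F A \in rv_values v q.
  have -> : F A = ml_eval q (fun i => v ([ffun i => if i \in A then j1 else j0] i)).
    apply: eq_bigr => S _; congr (_ * _); apply: eq_bigr => i _.
    by rewrite ffunE /cube_point; case: (i \in A).
  exact: rv_valuesP.
have sizeV : (size (rv_values v q) <= l ^ (d * sparsity p))%N.
  apply: leq_trans (size_rv_values_ident_distr w_gt0 pq) _.
  apply: leq_trans (size_rv_values v j0 pd) _.
  by case: (d * sparsity p)%N => [|e]; rewrite ?expn0 ?leq_exp2r.
have qF : (sparsity q <=
           #|[set S : {set 'I_n} | (S \subset relevant F) && (#|S| <= d)%N]|)%N.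
  apply: subset_leq_card; apply/subsetP => S; rewrite !inE => qS.
  by rewrite qd // andbT; apply/subsetP => i; apply: relevant_cube_restr.
apply: leq_trans qF (leq_trans (card_small_subsets _ _) _).
apply: leq_trans (Phi_ge d_gt0 sizeV); rewrite leq_exp2r // leq_add2r.
exact: card_relevant_range FV (fdeg_le_cube_restr _ _ qd).
Qed.

Lemma bounded_ex_max (P : nat -> Prop) (B : nat) :
  (exists x, P x) -> (forall t, P t -> (t <= B)%N) ->
  exists m, P m /\ forall t, P t -> (t <= m)%N.
Proof.
elim: B => [|B IH] [x Px] leB.
  by exists x; split=> // t /leB; rewrite leqn0 => /eqP ->.
have [PB|nPB] := classic (P B.+1); first by exists B.+1.
apply: IH; first by exists x.
move=> t Pt; have := leB t Pt; rewrite leq_eqVlt => /orP [/eqP Et|//].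
by rewrite Et in Pt.
Qed.

Lemma gap_achievable_refl (R : realType) (k : nat) (v w : 'I_k -> R) (d s : nat) :
  (1 <= d)%N -> gap_achievable v w d s s.
Proof.
move=> d_gt0; pose p : mlpoly R s := [ffun S : {set 'I_s} => (#|S| == 1)%N%:R].
have pE (S : {set 'I_s}) : (p S != 0) = (#|S| == 1)%N.
  by rewrite ffunE pnatr_eq0 eqb0 negbK.
have pd : ml_deg_le p d by move=> S; rewrite pE => /eqP ->.
have sp : sparsity p = s.
  rewrite -[s in RHS]card_ord -[#|_|]bin1 -card_draws /sparsity.
  by apply: eq_card => S; rewrite !inE pE.
by exists s, p, p.
Qed.

Theorem theorem1p5 (R : realType) (k : nat) (v w : 'I_k -> R) (l d s : nat) :
  finite_rv v w -> rv_mean v w = 0 -> rv_var v w = 1 -> (k <= l)%N ->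
  (1 <= d)%N -> (1 <= s)%N ->
  (* no pair with sparsity(q) > Phi *)
  (forall t : nat, (Phi d s l < t)%N -> ~ gap_achievable v w d s t) /\
  (* Max-Sparsity-Gap is well defined (a largest admissible t exists) and <= Phi *)
  (exists m : nat, [/\ gap_achievable v w d s m,
                      (forall t : nat, gap_achievable v w d s t -> (t <= m)%N)
                    & (m <= Phi d s l)%N]).
Proof.
move=> rv mean0 var1 kl d_gt0 _.
have bound t : gap_achievable v w d s t -> (t <= Phi d s l)%N.
  by case=> n [p [q [pd qd <- <- pq]]]; apply: sparsity_le_Phi pd qd pq.
split=> [t ltPhi /bound|]; first by rewrite leqNgt ltPhi.
have s_ach := gap_achievable_refl v w s d_gt0.
have [m [m_ach m_max]] := bounded_ex_max (ex_intro _ s s_ach) bound.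
by exists m; split=> //; apply: bound.
Qed.
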